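(* Let $(\vdash,\overline{\cdot},\widehat{\cdot})$ be a setting satisfying Pre-Relevance, let $\mathcal{S},\mathcal{S}'\subseteq\mathcal{L}$ with $\mathcal{S}\mid\mathcal{S}'$, let $\mathcal{E}$ be a preferred extension of $\mathcal{AF}_{\vdash}(\mathcal{S}\cup\mathcal{S}')$ and $\mathcal{E}_1=\mathcal{E}\cap\mathit{Arg}_{\vdash}(\mathcal{S})$. Then $\mathcal{E}_1$ is a preferred extension of $\mathcal{AF}_{\vdash}(\mathcal{S})$.
   Context: $\mathcal{L}$ is the set of formulas of a language built from propositional atoms; $\mathsf{Atoms}(\mathcal{S})$ is the set of atoms occurring in $\mathcal{S}$, and $\mathcal{S}_1\mid\mathcal{S}_2$ means $\mathsf{Atoms}(\mathcal{S}_1)\cap\mathsf{Atoms}(\mathcal{S}_2)=\emptyset$. A setting is $(\vdash,\overline{\cdot},\widehat{\cdot})$ with ${\vdash}\subseteq\wp_{\sf fin}(\mathcal{L})\times\mathcal{L}$ arbitrary, $\overline{\cdot}:\mathcal{L}\to\wp(\mathcal{L})$, $\widehat{\cdot}$ assigning to each nonempty finite set a finite set of formulas, with $\widehat{\emptyset}=\emptyset$. $\mathit{Arg}_{\vdash}(\mathcal{S})=\{(\Gamma,\gamma):\Gamma\subseteq\mathcal{S}\text{ finite},\Gamma\vdash\gamma\}$; $\mathcal{AF}_{\vdash}(\mathcal{S})$ is the attack graph on it where $(\Gamma,\gamma)$ attacks $(\Gamma',\gamma')$ iff $\gamma\in\overline{\phi}$ for some $\phi\in\widehat{\Gamma'}$.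 Complete extension = conflict-free set defending each member (every attacker of a member is attacked by a member) and containing every argument it defends; preferred = $\subseteq$-maximal complete. Pre-Relevance of the setting: (a) for all $\mathcal{S}_1,\mathcal{S}_2,\phi$ with $\mathcal{S}_1\cup\{\phi\}\mid\mathcal{S}_2$, $\mathcal{S}_1\cup\mathcal{S}_2\vdash\phi$ implies $\mathcal{S}_1'\vdash\phi$ for some $\mathcal{S}_1'\subseteq\mathcal{S}_1$; (b) primeness: for all sets of atoms $\mathcal{A}_1\mid\mathcal{A}_2$, all finite $\mathcal{S}_1,\mathcal{T}_1,\mathcal{S}_2,\mathcal{T}_2$ with $\mathsf{Atoms}(\mathcal{S}_i),\mathsf{Atoms}(\mathcal{T}_i)\subseteq\mathcal{A}_i$, and all $\phi,\psi$ with $\psi\in\overline{\phi}$, $\phi\in\widehat{\mathcal{T}_1\cup\mathcal{T}_2}$: if $\mathcal{S}_1\cup\mathcal{S}_2\vdash\psi$ then there are $i\in\{1,2\}$, $\mathcal{S}_i'\subseteq\mathcal{S}_i$, $\phi_i\in\widehat{\mathcal{T}_i}$, $\psi_i\in\overline{\phi_i}$ with $\mathcal{S}_i'\vdash\psi_i$; (c) $\widehat{\Delta}\subseteq\widehat{\Delta\cup\Delta'}$ for all finite $\Delta,\Delta'$. *)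

From HB Require Import structures.
From mathcomp Require Import all_boot.
From mathcomp Require Import finmap.

Set Implicit Arguments.
Unset Strict Implicit.
Unset Printing Implicit Defensive.

Local Open Scope fset_scope.

Section Defs.

Variables (Atom : Type) (Form : choiceType) (occ : Form -> Atom -> Prop).

Definition AtomsOf (S : Form -> Prop) : Atom -> Prop :=
  fun a => exists2 phi, S phi & occ phi a.

Definition fsetP (D : {fset Form}) : Form -> Prop := fun phi => phi \in D.

(* S1 | S2 : no shared atoms *)
Definition atom_disj (A1 A2 : Atom -> Prop) : Prop :=
  forall a, A1 a -> A2 a -> False.

Definition sep (S1 S2 : Form -> Prop) : Prop :=
  atom_disj (AtomsOf S1) (AtomsOf S2).

(* A setting (|-, overline, hat). [contrary phi psi] means psi \in overline(phi). *)
Record setting := Setting {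
  entails : {fset Form} -> Form -> Prop;
  contrary : Form -> Form -> Prop;
  hat : {fset Form} -> {fset Form};
  hat0 : hat fset0 = fset0
}.

Variable st : setting.

Definition PreRelevance_a : Prop :=
  forall (S1 S2 : {fset Form}) (phi : Form),
    sep (fsetP (phi |` S1)) (fsetP S2) ->
    entails st (S1 `|` S2) phi ->
    exists2 S1' : {fset Form}, S1' `<=` S1 & entails st S1' phi.

Definition PreRelevance_b : Prop :=
  forall (A1 A2 : Atom -> Prop), atom_disj A1 A2 ->
  forall (S1 T1 S2 T2 : {fset Form}),
    (forall a, AtomsOf (fsetP S1) a -> A1 a) ->
    (forall a, AtomsOf (fsetP T1) a -> A1 a) ->
    (forall a, AtomsOf (fsetP S2) a -> A2 a) ->
    (forall a, AtomsOf (fsetP T2) a -> A2 a) ->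
  forall phi psi : Form,
    contrary st phi psi -> phi \in hat st (T1 `|` T2) ->
    entails st (S1 `|` S2) psi ->
    (exists S1' phi1 psi1, [/\ S1' `<=` S1, phi1 \in hat st T1,
                              contrary st phi1 psi1 & entails st S1' psi1]) \/
    (exists S2' phi2 psi2, [/\ S2' `<=` S2, phi2 \in hat st T2,
                              contrary st phi2 psi2 & entails st S2' psi2]).

Definition PreRelevance_c : Prop :=
  forall D D' : {fset Form}, hat st D `<=` hat st (D `|` D').

Definition PreRelevance : Prop :=
  [/\ PreRelevance_a, PreRelevance_b & PreRelevance_c].

Definition argument := ({fset Form} * Form)%type.

Definition Arg (S : Form -> Prop) : argument -> Prop :=
  fun a => (forall phi, phi \in a.1 -> S phi) /\ entails st a.1 a.2.

Definition attacks (a b : argument) : Prop :=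
  exists2 phi, phi \in hat st b.1 & contrary st phi a.2.

(* Extensions of AF(S) = (Arg(S), attacks restricted to Arg(S)) *)
Definition subsetA (E F : argument -> Prop) : Prop := forall a, E a -> F a.

Definition conflict_free (S : Form -> Prop) (E : argument -> Prop) : Prop :=
  subsetA E (Arg S) /\ forall a b, E a -> E b -> ~ attacks a b.

Definition defends (S : Form -> Prop) (E : argument -> Prop) (a : argument) : Prop :=
  forall b, Arg S b -> attacks b a -> exists2 c, E c & attacks c b.

Definition complete_ext (S : Form -> Prop) (E : argument -> Prop) : Prop :=
  [/\ conflict_free S E,
      (forall a, E a -> defends S E a) &
      (forall a, Arg S a -> defends S E a -> E a)].

Definition preferred_ext (S : Form -> Prop) (E : argument -> Prop) : Prop :=
  complete_ext S E /\
  forall E', complete_ext S E' -> subsetA E E' -> subsetA E' E.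

End Defs.

From Pilot Require Import Defs.
From mathcomp Require Import all_boot finmap.
From Stdlib Require Import ClassicalEpsilon.

(* Pre-Relevance (b) says that an attack whose attacker and target both split
   along a partition of the atoms is already carried out inside one of the two
   parts.  Hence every attack of E on an argument over S is made by a
   sub-argument over S, which again lies in E; this gives completeness of the
   restriction of E to S.  For maximality, let E' be complete over S and
   contain that restriction: the arguments over S u S' defended by E u E' form
   a complete extension containing E, so by maximality of E they include E'.
   The delicate case is an attack of E' on an argument over S', which only a
   premise-free sub-argument can carry out; such an argument is unattackable
   and so belongs to E. *)

Set Implicit Arguments.
Unset Strict Implicit.
Unset Printing Implicit Defensive.

Local Open Scope fset_scope.

Section Arguments.

Variables (Atom : Type) (Form : choiceType) (occ : Form -> Atom -> Prop).
Variable st : setting Form.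

Local Notation Arg := (Arg st).
Local Notation attacks := (attacks st).
Local Notation defends := (defends st).
Local Notation complete_ext := (complete_ext st).

Lemma Arg_sub (S1 S2 : Form -> Prop) (a : argument Form) :
  (forall phi, S1 phi -> S2 phi) -> Arg S1 a -> Arg S2 a.
Proof. by move=> S12 [aS1 ent]; split=> // phi /aS1 /S12. Qed.

Lemma attacks_fset0 (a b : argument Form) : b.1 = fset0 -> ~ attacks a b.
Proof. by move=> b0 [phi]; rewrite b0 hat0 in_fset0. Qed.

Lemma complete_ext_fset0 (S : Form -> Prop) (E : argument Form -> Prop)
    (a : argument Form) :
  complete_ext S E -> Arg S a -> a.1 = fset0 -> E a.
Proof.
by move=> [_ _ closE] aS a0; apply: closE aS _ => b _ /(attacks_fset0 a0).
Qed.

Lemma sep_sym (S1 S2 : Form -> Prop) : sep occ S1 S2 -> sep occ S2 S1.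
Proof. by move=> sep12 x A2x A1x; apply: sep12 A1x A2x. Qed.

Lemma fset_split (S1 S2 : Form -> Prop) (G : {fset Form}) :
  (forall phi, phi \in G -> S1 phi \/ S2 phi) ->
  exists G1 G2 : {fset Form}, [/\ G = G1 `|` G2,
    forall phi, phi \in G1 -> S1 phi & forall phi, phi \in G2 -> S2 phi].
Proof.
move=> GS.
pose inS1 phi := if excluded_middle_informative (S1 phi) then true else false.
have inS1P phi : reflect (S1 phi) (inS1 phi).
  by rewrite /inS1; case: excluded_middle_informative => h; constructor.
exists [fset phi in G | inS1 phi], [fset phi in G | ~~ inS1 phi]; split.
- by apply/fsetP => phi; rewrite in_fsetU !inE -andb_orr orbN andbT.
- by move=> phi; rewrite !inE => /andP[_ /inS1P].
- by move=> phi; rewrite !inE => /andP[/GS[S1phi /inS1P[]|]].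
Qed.

Hypotheses (hb : PreRelevance_b occ st) (hc : PreRelevance_c st).

Lemma attacks_fsubset (b x c : argument Form) :
  x.1 `<=` c.1 -> attacks b x -> attacks b c.
Proof.
move=> xc [phi phi_x contr]; exists phi => //.
by have /fsubsetP := hc x.1 c.1; rewrite (fsetUidPr _ _ xc); apply.
Qed.

Lemma defends_fsubset (S : Form -> Prop) (E : argument Form -> Prop)
    (x c : argument Form) :
  x.1 `<=` c.1 -> defends S E c -> defends S E x.
Proof. by move=> xc defc b bS /(attacks_fsubset xc); apply: defc. Qed.

Lemma complete_ext_fsubset (S : Form -> Prop) (E : argument Form -> Prop)
    (x c : argument Form) :
  complete_ext S E -> E c -> Arg S x -> x.1 `<=` c.1 -> E x.
Proof.
move=> [_ defE closE] Ec xS xc.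
exact: closE xS (defends_fsubset xc (defE c Ec)).
Qed.

Lemma attack_split (S1 S2 : Form -> Prop) (c b : argument Form)
    (G1 G2 T1 T2 : {fset Form}) :
  sep occ S1 S2 -> c.1 = G1 `|` G2 -> b.1 = T1 `|` T2 ->
  (forall phi, phi \in G1 -> S1 phi) -> (forall phi, phi \in G2 -> S2 phi) ->
  (forall phi, phi \in T1 -> S1 phi) -> (forall phi, phi \in T2 -> S2 phi) ->
  entails st c.1 c.2 -> attacks c b ->
  (exists x : argument Form,
     [/\ x.1 `<=` G1, entails st x.1 x.2 & attacks x (T1, b.2)]) \/
  (exists x : argument Form,
     [/\ x.1 `<=` G2, entails st x.1 x.2 & attacks x (T2, b.2)]).
Proof.
move=> sep12 c12 b12 G1S1 G2S2 T1S1 T2S2 ent [phi phi_b contr].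
have atoms P (G : {fset Form}) : (forall phi, phi \in G -> P phi) ->
    forall a, AtomsOf occ (Defs.fsetP G) a -> AtomsOf occ P a.
  by move=> GP a [psi /GP Ppsi occ_a]; exists psi.
rewrite c12 in ent; rewrite b12 in phi_b.
have [[G1' [p1 [q1 [? ? ? ?]]]] | [G2' [p2 [q2 [? ? ? ?]]]]] :=
  hb sep12 (atoms _ _ G1S1) (atoms _ _ T1S1) (atoms _ _ G2S2) (atoms _ _ T2S2)
     contr phi_b ent.
- by left; exists (G1', q1); split=> //; exists p1.
- by right; exists (G2', q2); split=> //; exists p2.
Qed.

Section Separated.

Variables (S1 S2 : Form -> Prop).
Hypothesis sep12 : sep occ S1 S2.

Local Notation S12 := (fun phi => S1 phi \/ S2 phi).

Lemma attack_split_union (c b : argument Form) :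
  Arg S12 c -> Arg S12 b -> attacks c b ->
  exists x : argument Form,
    [/\ x.1 `<=` c.1, Arg S1 x \/ Arg S2 x & attacks x b].
Proof.
move=> [cS ent] [bS _] cb.
have [G1 [G2 [c12 G1S1 G2S2]]] := fset_split cS.
have [T1 [T2 [b12 T1S1 T2S2]]] := fset_split bS.
have [[x [xG ? xT]] | [x [xG ? xT]]] :=
  attack_split sep12 c12 b12 G1S1 G2S2 T1S1 T2S2 ent cb.
- exists x; split; first by rewrite c12 (fsubset_trans xG) ?fsubsetUl.
    by left; split=> // phi /(fsubsetP xG) /G1S1.
  by apply: attacks_fsubset xT => /=; rewrite b12 fsubsetUl.
- exists x; split; first by rewrite c12 (fsubset_trans xG) ?fsubsetUr.
    by right; split=> // phi /(fsubsetP xG) /G2S2.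
  by apply: attacks_fsubset xT => /=; rewrite b12 fsubsetUr.
Qed.

Lemma attack_restrict (c b : argument Form) :
  Arg S12 c -> Arg S1 b -> attacks c b ->
  exists x : argument Form, [/\ x.1 `<=` c.1, Arg S1 x & attacks x b].
Proof.
move=> [cS ent] [bS _] cb.
have fset0S2 phi : phi \in fset0 -> S2 phi by rewrite in_fset0.
have [G1 [G2 [c12 G1S1 G2S2]]] := fset_split cS.
have [[x [xG ? xb]] | [x [_ _ /attacks_fset0 []//]]] :=
  attack_split sep12 c12 (esym (fsetU0 b.1)) G1S1 G2S2 bS fset0S2 ent cb.
exists x; split=> //; first by rewrite c12 (fsubset_trans xG) ?fsubsetUl.
by split=> // phi /(fsubsetP xG) /G1S1.
Qed.

Lemma attack_cross (d a : argument Form) :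
  Arg S1 d -> Arg S2 a -> attacks d a ->
  exists x : argument Form, [/\ x.1 = fset0, entails st x.1 x.2 & attacks x a].
Proof.
move=> [dS ent] [aS _] da.
have fset0S (P : Form -> Prop) phi : phi \in fset0 -> P phi by rewrite in_fset0.
have [[x [x0 ? xa]] | [x [_ _ /attacks_fset0 []//]]] :=
  attack_split (sep_sym sep12) (esym (fset0U d.1)) (esym (fsetU0 a.1))
    (fset0S S2) dS aS (fset0S S1) ent da.
by exists x; split=> //; apply/eqP; rewrite -fsubset0.
Qed.

End Separated.

Section Restriction.

Variables (S S' : Form -> Prop) (E : argument Form -> Prop).
Hypothesis sepS : sep occ S S'.

Local Notation U := (fun phi => S phi \/ S' phi).

Hypothesis hE : complete_ext U E.

Local Notation E1 := (fun a => E a /\ Arg S a).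

Let Arg_SU (a : argument Form) : Arg S a -> Arg U a.
Proof. exact: Arg_sub (fun phi => @or_introl _ _). Qed.

Let Arg_S'U (a : argument Form) : Arg S' a -> Arg U a.
Proof. exact: Arg_sub (fun phi => @or_intror _ _). Qed.

Lemma complete_ext_Arg (a : argument Form) : E a -> Arg U a.
Proof. by case: hE => [[EU _] _ _]; apply: EU. Qed.

Lemma complete_ext_attack_restrict (c b : argument Form) :
  E c -> Arg S b -> attacks c b -> exists2 x, E1 x & attacks x b.
Proof.
move=> Ec bS cb.
have [x [xc xS xb]] := attack_restrict sepS (complete_ext_Arg Ec) bS cb.
by exists x => //; split=> //; apply: complete_ext_fsubset hE Ec (Arg_SU xS) xc.
Qed.

Lemma complete_ext_restrict : complete_ext S E1.
Proof.
have [[_ cfE] defE closE] := hE.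
split.
- by split=> [a [] | a b [Ea _] [Eb _]] //; apply: cfE.
- move=> a [Ea _] b bS ba.
  have [c Ec cb] := defE a Ea b (Arg_SU bS) ba.
  exact: complete_ext_attack_restrict Ec bS cb.
- move=> a aS defa; split=> //; apply: closE (Arg_SU aS) _ => b bU ba.
  have [x [xb xS xa]] := attack_restrict sepS bU aS ba.
  have [y [Ey _] yx] := defa x xS xa.
  by exists y => //; apply: attacks_fsubset yx.
Qed.

Section Maximality.

Variable E' : argument Form -> Prop.
Hypotheses (hE' : complete_ext S E') (E1E' : subsetA E1 E').

Local Notation D := (fun a => E a \/ E' a).

Let Arg_E' (a : argument Form) : E' a -> Arg S a.
Proof. by case: hE' => [[E'S _] _ _]; apply: E'S. Qed.

Lemma complete_ext_attack_E' (c b : argument Form) :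
  E c -> Arg S b -> attacks c b -> exists2 w, E' w & attacks w b.
Proof.
move=> Ec bS cb; have [x E1x xb] := complete_ext_attack_restrict Ec bS cb.
by exists x => //; apply: E1E'.
Qed.

Lemma union_Arg (a : argument Form) : D a -> Arg U a.
Proof. by case=> [/complete_ext_Arg | /Arg_E' /Arg_SU]. Qed.

Lemma union_conflict_free (x y : argument Form) : D x -> D y -> ~ attacks x y.
Proof.
have [[_ cfE] defE _] := hE; have [[_ cfE'] _ _] := hE'.
case=> [Ex | E'x] [Ey | E'y] xy.
- exact: cfE Ex Ey xy.
- have [w E'w wy] := complete_ext_attack_E' Ex (Arg_E' E'y) xy.
  exact: cfE' E'w E'y wy.
- have [f Ef fx] := defE y Ey x (Arg_SU (Arg_E' E'x)) xy.
  have [w E'w wx] := complete_ext_attack_E' Ef (Arg_E' E'x) fx.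
  exact: cfE' E'w E'x wx.
- exact: cfE' E'x E'y xy.
Qed.

Lemma union_defends (x : argument Form) : D x -> defends U D x.
Proof.
have [_ defE _] := hE; have [_ defE' _] := hE'.
case=> [Ex b bU bx | E'x b bU bx].
  by have [c Ec cb] := defE x Ex b bU bx; exists c; first left.
have [z [zb zS zx]] := attack_restrict sepS bU (Arg_E' E'x) bx.
have [w E'w wz] := defE' x E'x z zS zx.
by exists w; [right | apply: attacks_fsubset zb wz].
Qed.

Lemma union_defended_E' (x : argument Form) : Arg S x -> defends U D x -> E' x.
Proof.
have [_ _ closE'] := hE'.
move=> xS defx; apply: closE' xS _ => b bS bx.
have [c [Ec | E'c] cb] := defx b (Arg_SU bS) bx; last by exists c.
exact: complete_ext_attack_E' Ec bS cb.
Qed.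

Lemma union_defended_E (x : argument Form) : Arg S' x -> defends U D x -> E x.
Proof.
have [_ _ closE] := hE.
move=> xS' defx; apply: closE (Arg_S'U xS') _ => z zU zx.
have zU' : Arg (fun phi => S' phi \/ S phi) z.
  exact: Arg_sub (fun phi => proj1 (or_comm _ _)) zU.
have [y [yz yS' yx]] := attack_restrict (sep_sym sepS) zU' xS' zx.
have [d [Ed | E'd] dy] := defx y (Arg_S'U yS') yx.
  by exists d => //; apply: attacks_fsubset yz dy.
have [w [w0 went wy]] := attack_cross sepS (Arg_E' E'd) yS' dy.
have wU : Arg U w by split=> // phi; rewrite w0 in_fset0.
exists w; first exact: complete_ext_fset0 hE wU w0.
exact: attacks_fsubset yz wy.
Qed.

Local Notation defended := (fun a => Arg U a /\ defends U D a).

Lemma complete_ext_union_defended : complete_ext U defended.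
Proof.
split.
- split=> [a [] // | x y [xU defx] [yU defy] xy].
  have [d Dd dx] := defy x xU xy.
  have [d' Dd' d'd] := defx d (union_Arg Dd) dx.
  exact: union_conflict_free Dd' Dd d'd.
- move=> c [_ defc] b bU bc; have [d Dd db] := defc b bU bc.
  by exists d => //; split; [apply: union_Arg | apply: union_defends].
- move=> x xU defx; split=> // b bU bx.
  have [c [cU defc] cb] := defx b bU bx.
  have [y [yc [yS | yS'] yb]] := attack_split_union sepS cU bU cb.
  + exists y => //; right.
    exact: union_defended_E' yS (defends_fsubset yc defc).
  + exists y => //; left.
    exact: union_defended_E yS' (defends_fsubset yc defc).
Qed.

Hypothesis maxE : forall F, complete_ext U F -> subsetA E F -> subsetA F E.

Lemma complete_ext_restrict_maximal : subsetA E' E1.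
Proof.
have union_sub_defended a : D a -> Arg U a /\ defends U D a.
  by move=> Da; split; [apply: union_Arg | apply: union_defends].
move=> a E'a; split; last exact: Arg_E'.
have E_defended : subsetA E defended.
  by move=> b Eb; apply: union_sub_defended; left.
exact: maxE complete_ext_union_defended E_defended a
  (union_sub_defended a (or_intror E'a)).
Qed.

End Maximality.

End Restriction.

End Arguments.

Theorem lemma8 (Atom : Type) (Form : choiceType) (occ : Form -> Atom -> Prop)
  (st : setting Form) (S S' : Form -> Prop) (E : argument Form -> Prop) :
  PreRelevance occ st ->
  sep occ S S' ->
  preferred_ext st (fun phi => S phi \/ S' phi) E ->
  preferred_ext st S (fun a => E a /\ Arg st S a).
Proof.
move=> [_ hb hc] sepS [hE maxE].
split; first exact: (complete_ext_restrict hb hc sepS hE).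
move=> E' hE' E1E'.
exact: (complete_ext_restrict_maximal hb hc sepS hE hE' E1E' maxE).
Qed.
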